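(* Let $(V_i)_{i\in I}$ be a set of $n$-parameter persistence modules such that $\prod_{i\in I}V_i$ is q-tame. Then the canonical map $\varphi:\bigoplus_{i\in I}V_i\to\prod_{i\in I}V_i$ is a weak equivalence, i.e. $\ker\varphi$ and $\operatorname{cok}\varphi$ are ephemeral.
   Context: Fix a field $\mathbb{k}$. An $n$-parameter persistence module is a functor $V:\mathbf{R}^n\to\mathbf{Vect}_{\mathbb{k}}$ ($\mathbf{R}^n$ with componentwise order), structure maps $V_{s,t}$. Write $s\ll t$ if $s_i<t_i$ for all $i$. $V$ is q-tame if $V_{s,t}$ has finite rank whenever $s\ll t$, and ephemeral if $V_{s,t}=0$ whenever $s\ll t$. Direct sums and products are computed pointwise. *)

From HB Require Import structures.
From Stdlib Require Import Reals.
From Stdlib Require List.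
From mathcomp Require Import all_boot all_algebra.
Unset Printing Implicit Defensive.
Import GRing.Theory.
Local Open Scope ring_scope.

Definition pt (n : nat) := 'I_n -> R.

Definition ple {n} (s t : pt n) : Prop := forall i, Rle (s i) (t i).
Definition pll {n} (s t : pt n) : Prop := forall i, Rlt (s i) (t i).

(* An n-parameter persistence module over the field K: a functor
   R^n -> Vect_K.  [pm_map s t] is the structure map V_{s,t}; it is only
   meaningful (and only constrained) when s <= t. *)
Record pmod (K : fieldType) (n : nat) := PMod {
  pm_sp : pt n -> lmodType K;
  pm_map : forall s t : pt n, {linear pm_sp s -> pm_sp t};
  pm_id : forall s (x : pm_sp s), pm_map s s x = x;
  pm_comp : forall s t u (x : pm_sp s), ple s t -> ple t u ->
      pm_map t u (pm_map s t x) = pm_map s u x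
}.
Arguments pm_sp {K n} _ _.
Arguments pm_map {K n} _ _ _.

Definition prod_elt {K n} {I : Type} (V : I -> pmod K n) (s : pt n) :=
  forall i : I, pm_sp (V i) s.

Definition prod_map {K n I} (V : I -> pmod K n) (s t : pt n)
  (x : prod_elt V s) : prod_elt V t := fun i => pm_map (V i) s t (x i).

(* An element of the product lies in the direct sum iff it has finite
   support. *)
Definition fin_supp {K n I} (V : I -> pmod K n) (s : pt n) (x : prod_elt V s)
  : Prop := exists J : seq I, forall i, ~ List.In i J -> x i = 0.

Definition prod_finite_rank {K n I} (V : I -> pmod K n) (s t : pt n)
  (f : prod_elt V s -> prod_elt V t) : Prop :=
  exists xs : seq (prod_elt V t), forall u : prod_elt V s,
    exists c : 'I_(size xs) -> K,
      forall i, f u i = \sum_(j < size xs) c j *: (nth (fun _ => 0) xs j) i.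

Definition prod_qtame {K n I} (V : I -> pmod K n) : Prop :=
  forall s t : pt n, pll s t -> prod_finite_rank V s t (prod_map V s t).

(* The canonical map phi : (+)_i V_i -> prod_i V_i sends a finitely supported
   family x to itself. *)

(* ker phi is ephemeral: for s << t, the induced map ker phi_s -> ker phi_t
   (restriction of the direct-sum structure map) is zero. *)
Definition ker_canon_ephemeral {K n I} (V : I -> pmod K n) : Prop :=
  forall s t : pt n, pll s t ->
    forall x : prod_elt V s, fin_supp V _ x -> (forall i, x i = 0) ->
      forall i, pm_map (V i) s t (x i) = 0.

(* cok phi is ephemeral: for s << t, the induced map cok phi_s -> cok phi_t
   is zero, i.e. prod_{s,t} maps every y into im phi_t. *)
Definition cok_canon_ephemeral {K n I} (V : I -> pmod K n) : Prop :=
  forall s t : pt n, pll s t ->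
    forall y : prod_elt V s,
      exists x : prod_elt V t, fin_supp V _ x /\ (forall i, x i = prod_map V s t y i).

Definition canon_weak_equiv {K n I} (V : I -> pmod K n) : Prop :=
  ker_canon_ephemeral V /\ cok_canon_ephemeral V.

(* Only finitely many components of prod_i V_i can have a nonzero structure map
   V_i{s,t} when s << t: choosing for m such components a vector of V_i(s)
   supported at i with nonzero image, the m images have disjoint nonzero
   supports, hence are linearly independent, so m is at most the rank of the
   product map.  Hence prod_{s,t} lands in the finitely supported families,
   i.e. cok phi is ephemeral; ker phi is zero since phi is injective. *)
From mathcomp Require Import all_boot all_algebra.
From Stdlib Require Import ClassicalEpsilon.
From Stdlib Require List.
Import GRing.Theory.
Local Open Scope ring_scope.

Lemma cover_of_bounded_injections {T : Type} (P : T -> Prop) {N : nat} :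
  (forall m (idx : 'I_m -> T), injective idx -> (forall k, P (idx k)) ->
     (m <= N)%N) ->
  exists J : seq T, forall x, P x -> List.In x J.
Proof.
move=> bounded; apply: NNPP => no_cover.
have long_lists k : exists L : seq T,
    [/\ List.NoDup L, List.Forall P L & List.length L = k].
  elim: k => [|k [L [uniqL PL <-]]]; first by exists [::]; split; constructor.
  have [x [Px xL]] : exists x, P x /\ ~ List.In x L.
    apply: NNPP => all_in; apply: no_cover; exists L => x Px.
    by apply: NNPP => xL; apply: all_in; exists x.
  by exists (x :: L); split=> //; constructor.
have [[|d L] [uniqL PL lenL]] := long_lists N.+1; first by [].
pose idx (k : 'I_(List.length (d :: L))) := List.nth k (d :: L) d.
have idx_inj : injective idx.
  move=> k l /(proj1 (List.NoDup_nth _ d) uniqL) eq_kl.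
  by apply/val_inj/eq_kl; apply/ltP.
have Pidx k : P (idx k) by apply: (proj1 (List.Forall_nth _ _) PL); apply/ltP.
by have := bounded _ idx idx_inj Pidx; rewrite lenL ltnn.
Qed.

Section ComponentwiseMaps.
Context {K : fieldType} {I : Type} {A B : I -> lmodType K}.
Variable f : forall i, {linear A i -> B i}.

Definition nonzero_witness (i : I) : A i :=
  epsilon (inhabits 0) (fun v => f i v != 0).

Lemma nonzero_witnessP i :
  (exists v, f i v != 0) -> f i (nonzero_witness i) != 0.
Proof. exact: epsilon_spec. Qed.

(* Witnesses are chosen on all of [I] at once so that no transport from [A x]
   to [A i] is needed when [i = x]; [I] has no decidable equality, hence the
   classical test. *)
Definition supported_at (x : I) : forall i, A i :=
  fun i => if excluded_middle_informative (i = x) then nonzero_witness i else 0.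

Lemma supported_at_id x : supported_at x x = nonzero_witness x.
Proof. by rewrite /supported_at; case: excluded_middle_informative. Qed.

Lemma supported_at_out x i : i <> x -> supported_at x i = 0.
Proof. by rewrite /supported_at; case: excluded_middle_informative. Qed.

Context {xs : seq (forall i, B i)}.
Hypothesis f_spanned : forall u : forall i, A i,
  exists c : 'I_(size xs) -> K,
    forall i, f i (u i) = \sum_(j < size xs) c j *: (nth (fun _ => 0) xs j) i.

Lemma nonzero_components_le_rank m (idx : 'I_m -> I) :
  injective idx -> (forall k, exists v, f (idx k) v != 0) -> (m <= size xs)%N.
Proof.
move=> idx_inj idx_nz.
have [c cP] := fin_all_exists (fun k => f_spanned (supported_at (idx k))).
pose M : 'M[K]_(m, size xs) := \matrix_(k, j) c k j.
suff /eqP <- : row_free M by exact: rank_leq_col.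
apply: inj_row_free => a aM0; apply/rowP => p; rewrite mxE.
set i := idx p.
pose y := \sum_k a 0 k *: f i (supported_at (idx k) i).
have y_single : y = a 0 p *: f i (nonzero_witness i).
  rewrite /y (bigD1 p) //= supported_at_id big1 ?addr0 // => k /eqP neq_kp.
  by rewrite supported_at_out ?linear0 ?scaler0 // => /idx_inj/esym.
have y0 : y = 0.
  rewrite /y; under eq_bigr do rewrite cP scaler_sumr.
  rewrite exchange_big big1 // => j _.
  under eq_bigr do rewrite scalerA.
  rewrite -scaler_suml.
  suff <- : (a *m M) 0 j = \sum_k a 0 k * c k j by rewrite aM0 mxE scale0r.
  by rewrite mxE; apply: eq_bigr => k _; rewrite mxE.
have /negPf witness_nz := nonzero_witnessP _ (idx_nz p).
by move/eqP: y0; rewrite y_single scaler_eq0 witness_nz orbF => /eqP.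
Qed.

Lemma finite_support_of_finite_rank :
  exists J : seq I, forall i, ~ List.In i J -> forall v, f i v = 0.
Proof.
have [J J_nz] := cover_of_bounded_injections
  (fun i => exists v, f i v != 0) nonzero_components_le_rank.
exists J => i iJ v; apply/eqP/negPn/negP => nz.
by apply/iJ/J_nz; exists v.
Qed.

End ComponentwiseMaps.

Theorem lemma3p9 (K : fieldType) (n : nat) (I : Type) (V : I -> pmod K n) :
  prod_qtame V -> canon_weak_equiv V.
Proof.
move=> qtame; split=> [s t _ x _ x0 i | s t lt_st y].
  by rewrite x0 linear0.
have [xs spanned] := qtame s t lt_st.
have [J J0] :=
  finite_support_of_finite_rank (fun i => pm_map (V i) s t) spanned.
by exists (prod_map V s t y); split=> //; exists J => i iJ; exact: J0.
Qed.
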